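(* Let $T$ be a rooted binary phylogenetic tree with root $\rho$ of out-degree 2 and children $\rho_1,\rho_2$, and let $\dot T_1,\dot T_2$ be as defined in the context. Under the $N_r$ model (any $r\ge2$), $$RA_\varphi(T)=\tfrac12\big(RA_\varphi(\dot T_1)+RA_\varphi(\dot T_2)\big).$$
   Context: A rooted binary phylogenetic tree is a finite tree with a distinguished root vertex $\rho$, all edges directed away from $\rho$, in which $\rho$ has out-degree 2 or 1 (in the latter case the edge at $\rho$ is the stem edge), and every other vertex has in-degree 1 and out-degree 0 or 2; out-degree-0 vertices are leaves. Under the Neyman $r$-state model $N_r$ ($r\ge2$) on a state set of size $r$, each edge $e$ carries a substitution probability $p_e\in[0,\frac{r-1}{r}]$; given the root state, states propagate independently along edges: for an edge $(u,v)$, $F(v)=F(u)$ with probability $1-p_e$, and otherwise $F(v)$ is uniform among the $r-1$ other states; $f$ is the restriction of $F$ to the leaves. The coin-toss method $\varphi$: leaves get their states $f(x)$; proceeding towards the root, a vertex whose two children have equal states gets that state, otherwise one of the two states chosen by an independent fair coin toss; a vertex with a single child gets its child's state. $RA_\varphi$ is the probability that the state assigned to the root equals the true root state. For $i=1,2$, $T_i$ is the maximal subtree of $T$ rooted at $\rho_i$, and $\dot T_i$ is the tree consisting of $T_i$ together with the edge $(\rho,\rho_i)$ (with its substitution probability from $T$) as stem edge, rooted at $\rho$. *)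

From HB Require Import structures.
From mathcomp Require Import all_boot all_order all_algebra.
Unset Printing Implicit Defensive.
Import Order.TTheory GRing.Theory Num.Theory.
Local Open Scope ring_scope.

(* Non-root part of a rooted binary phylogenetic tree: a vertex is either a
   leaf, or has two children; [Bin p1 t1 p2 t2] has child subtrees t1, t2
   reached by edges with substitution probabilities p1, p2. *)
Inductive tree (R : Type) : Type :=
| Leaf : tree R
| Bin : R -> tree R -> R -> tree R -> tree R.
Arguments Leaf {R}.
Arguments Bin {R}.

(* A rooted binary phylogenetic tree: the root has out-degree 2
   ([RBin p1 t1 p2 t2]) or out-degree 1 (stem edge with probability p). *)
Inductive rtree (R : Type) : Type :=
| RBin : R -> tree R -> R -> tree R -> rtree R
| RStem : R -> tree R -> rtree R.
Arguments RBin {R}.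
Arguments RStem {R}.

Fixpoint nleaves {R : Type} (t : tree R) : nat :=
  match t with
  | Leaf => 1
  | Bin _ t1 _ t2 => nleaves t1 + nleaves t2
  end%N.

Definition rnleaves {R : Type} (t : rtree R) : nat :=
  match t with
  | RBin _ t1 _ t2 => nleaves t1 + nleaves t2
  | RStem _ t => nleaves t
  end%N.

Definition okp {R : realFieldType} (r : nat) (p : R) : bool :=
  (0 <= p) && (p <= (r.-1)%:R / r%:R).

Fixpoint valid_tree {R : realFieldType} (r : nat) (t : tree R) : bool :=
  match t with
  | Leaf => true
  | Bin p1 t1 p2 t2 => [&& okp r p1, okp r p2, valid_tree r t1 & valid_tree r t2]
  end.

Definition valid_rtree {R : realFieldType} (r : nat) (t : rtree R) : bool :=
  match t with
  | RBin p1 t1 p2 t2 => [&& okp r p1, okp r p2, valid_tree r t1 & valid_tree r t2]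
  | RStem p t => okp r p && valid_tree r t
  end.

Definition Ntrans {R : realFieldType} {r : nat} (p : R) (a c : 'I_r) : R :=
  if a == c then 1 - p else p / (r.-1)%:R.

(* lik t a f = probability that the leaves of t (in left-to-right order)
   receive the states f, given that the root of t has state a. *)
Fixpoint lik {R : realFieldType} {r : nat} (t : tree R) (a : 'I_r)
    (f : seq 'I_r) : R :=
  match t with
  | Leaf => (f == [:: a])%:R
  | Bin p1 t1 p2 t2 =>
      \sum_(c1 : 'I_r) \sum_(c2 : 'I_r)
        Ntrans p1 a c1 * Ntrans p2 a c2 *
        lik t1 c1 (take (nleaves t1) f) * lik t2 c2 (drop (nleaves t1) f)
  end.

Definition rlik {R : realFieldType} {r : nat} (t : rtree R) (a : 'I_r)
    (f : seq 'I_r) : R :=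
  match t with
  | RBin p1 t1 p2 t2 =>
      \sum_(c1 : 'I_r) \sum_(c2 : 'I_r)
        Ntrans p1 a c1 * Ntrans p2 a c2 *
        lik t1 c1 (take (nleaves t1) f) * lik t2 c2 (drop (nleaves t1) f)
  | RStem p t => \sum_(c : 'I_r) Ntrans p a c * lik t c f
  end.

Definition coin {R : realFieldType} {r : nat} (b1 b2 b : 'I_r) : R :=
  if b1 == b2 then (b == b1)%:R
  else 2^-1 * ((b == b1)%:R + (b == b2)%:R).

(* ct t f b = probability that the coin-toss method, applied to t with leaf
   states f (left-to-right order), assigns state b to the root of t. *)
Fixpoint ct {R : realFieldType} {r : nat} (t : tree R) (f : seq 'I_r)
    (b : 'I_r) : R :=
  match t with
  | Leaf => (f == [:: b])%:R
  | Bin _ t1 _ t2 =>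
      \sum_(b1 : 'I_r) \sum_(b2 : 'I_r)
        ct t1 (take (nleaves t1) f) b1 * ct t2 (drop (nleaves t1) f) b2 *
        coin b1 b2 b
  end.

Definition rct {R : realFieldType} {r : nat} (t : rtree R) (f : seq 'I_r)
    (b : 'I_r) : R :=
  match t with
  | RBin _ t1 _ t2 =>
      \sum_(b1 : 'I_r) \sum_(b2 : 'I_r)
        ct t1 (take (nleaves t1) f) b1 * ct t2 (drop (nleaves t1) f) b2 *
        coin b1 b2 b
  | RStem _ t => ct t f b
  end.

Definition RA {R : realFieldType} {r : nat} (pi : 'I_r -> R) (t : rtree R) : R :=
  \sum_(a : 'I_r) pi a *
    \sum_(f : (rnleaves t).-tuple 'I_r) rlik t a f * rct t f a.

From HB Require Import structures.
From mathcomp Require Import all_boot all_order all_algebra ring.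
Import Order.TTheory GRing.Theory Num.Theory.
Local Open Scope ring_scope.

(* Given the true root state a, the leaf states of the two subtrees are
   independent, and the coin toss at the root assigns a with probability
   1/2 [b1 = a] + 1/2 [b2 = a] whether or not b1 = b2.  Averaging over the
   leaves, the contribution of each subtree is its own reconstruction
   probability when the edge to the root is its stem, while the other subtree
   contributes a total mass 1. *)

Lemma sum_tuple_cat (R : nmodType) (T : finType) (n1 n2 : nat)
    (F : seq T -> R) :
  \sum_(f : (n1 + n2).-tuple T) F f =
  \sum_(g : n1.-tuple T) \sum_(h : n2.-tuple T) F (g ++ h).
Proof.
have size_take_tuple (f : (n1 + n2).-tuple T) : size (take n1 f) == n1.
  by rewrite size_takel ?size_tuple ?leq_addr.
have size_drop_tuple (f : (n1 + n2).-tuple T) : size (drop n1 f) == n2.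
  by rewrite size_drop size_tuple addKn.
rewrite pair_big (reindex (fun gh => cat_tuple gh.1 gh.2)) //=.
exists (fun f => (Tuple (size_take_tuple f), Tuple (size_drop_tuple f))).
  move=> [g h] _; congr pair; apply: val_inj => /=.
    by rewrite take_size_cat ?size_tuple.
  by rewrite drop_size_cat ?size_tuple.
by move=> f _; apply: val_inj; rewrite /= cat_take_drop.
Qed.

Section CoinToss.
Variables (R : realFieldType) (r : nat).

Lemma sum_indicator (a : 'I_r) : \sum_(b : 'I_r) (b == a)%:R = 1 :> R.
Proof. by rewrite (bigD1 a) //= eqxx big1 ?addr0 // => b /negbTE ->. Qed.

Lemma sum_mul_indicator (F : 'I_r -> R) (a : 'I_r) :
  \sum_(b : 'I_r) F b * (a == b)%:R = F a.
Proof.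
rewrite (bigD1 a) //= eqxx mulr1 big1 ?addr0 // => b /negbTE nba.
by rewrite eq_sym nba mulr0.
Qed.

Lemma half_mulr2n (x : R) : 2^-1 * (x *+ 2) = x.
Proof. by rewrite -[x *+ 2]mulr_natl mulrA mulVf ?mul1r ?pnatr_eq0. Qed.

Lemma coinE (b1 b2 b : 'I_r) :
  coin b1 b2 b = 2^-1 * ((b == b1)%:R + (b == b2)%:R) :> R.
Proof.
rewrite /coin; case: eqP => // ->.
by rewrite -mulr2n half_mulr2n.
Qed.

Lemma sum_coin_mean (u v : 'I_r -> R) (a : 'I_r) :
  \sum_(b : 'I_r) u b = 1 -> \sum_(b : 'I_r) v b = 1 ->
  \sum_(b1 : 'I_r) \sum_(b2 : 'I_r) u b1 * v b2 * coin b1 b2 a =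
  2^-1 * (u a + v a).
Proof.
move=> su sv.
transitivity (2^-1 * \sum_(b1 : 'I_r) \sum_(b2 : 'I_r)
    (u b1 * (a == b1)%:R * v b2 + u b1 * (v b2 * (a == b2)%:R))).
  rewrite mulr_sumr; apply: eq_bigr => b1 _.
  rewrite mulr_sumr; apply: eq_bigr => b2 _.
  by rewrite coinE; ring.
under eq_bigr do rewrite big_split /=.
by rewrite big_split /= -!big_distrlr /= !sum_mul_indicator su sv mulr1 mul1r.
Qed.

Lemma sum_ct (t : tree R) (f : seq 'I_r) :
  size f = nleaves t -> \sum_(b : 'I_r) ct t f b = 1.
Proof.
elim: t f => [|p1 t1 IH1 p2 t2 IH2] f /= sf.
  case: f sf => [|x [|]] //= _.
  rewrite -[RHS](sum_indicator x); apply: eq_bigr => b _.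
  by rewrite eqseq_cons andbT eq_sym.
have s1 : size (take (nleaves t1) f) = nleaves t1.
  by rewrite size_takel ?sf ?leq_addr.
have s2 : size (drop (nleaves t1) f) = nleaves t2.
  by rewrite size_drop sf addKn.
under eq_bigr do rewrite (sum_coin_mean _ _ _ (IH1 _ s1) (IH2 _ s2)).
by rewrite -mulr_sumr big_split /= (IH1 _ s1) (IH2 _ s2) -mulr2n half_mulr2n.
Qed.

Lemma rct_RBin_cat (p1 p2 : R) (t1 t2 : tree R) (g h : seq 'I_r) (b : 'I_r) :
  size g = nleaves t1 -> size h = nleaves t2 ->
  rct (RBin p1 t1 p2 t2) (g ++ h) b = 2^-1 * (ct t1 g b + ct t2 h b).
Proof.
move=> sg sh; rewrite /= -sg take_size_cat // drop_size_cat //.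
exact: sum_coin_mean _ _ _ (sum_ct _ _ sg) (sum_ct _ _ sh).
Qed.

End CoinToss.

Section Likelihood.
Variables (R : realFieldType) (r : nat).
Hypothesis r_ge2 : (2 <= r)%N.

Lemma sum_Ntrans (p : R) (a : 'I_r) : \sum_(c : 'I_r) Ntrans p a c = 1.
Proof.
rewrite (bigD1 a) //= /Ntrans eqxx.
rewrite (eq_bigr (fun=> p / (r.-1)%:R)) => [|c]; last by rewrite eq_sym => /negbTE ->.
rewrite sumr_const cardC1 card_ord -[(p / _) *+ _]mulr_natr mulfVK ?subrK //.
by rewrite pnatr_eq0 -lt0n -ltnS prednK // ltnW.
Qed.

Lemma rlik_RBin_cat (p1 p2 : R) (t1 t2 : tree R) (g h : seq 'I_r) (a : 'I_r) :
  size g = nleaves t1 ->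
  rlik (RBin p1 t1 p2 t2) a (g ++ h) =
  rlik (RStem p1 t1) a g * rlik (RStem p2 t2) a h.
Proof.
move=> sg; rewrite /= -sg take_size_cat // drop_size_cat // big_distrlr /=.
apply: eq_bigr => c1 _; apply: eq_bigr => c2 _.
by rewrite -!mulrA; congr (_ * _); rewrite mulrCA.
Qed.

Lemma sum_rlik_RStem (p : R) (t : tree R) (a : 'I_r) :
  (forall c, \sum_(g : (nleaves t).-tuple 'I_r) lik t c g = 1) ->
  \sum_(g : (nleaves t).-tuple 'I_r) rlik (RStem p t) a g = 1.
Proof.
move=> sum_lik_t; rewrite exchange_big /= -[RHS](sum_Ntrans p a).
by apply: eq_bigr => c _; rewrite -mulr_sumr sum_lik_t mulr1.
Qed.

Lemma sum_lik (t : tree R) (c : 'I_r) :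
  \sum_(g : (nleaves t).-tuple 'I_r) lik t c g = 1.
Proof.
elim: t c => [|p1 t1 IH1 p2 t2 IH2] c.
  rewrite (bigD1 [tuple c]) //= eqxx big1 ?addr0 // => g.
  by move=> /eqP ne_gc; case: eqP => // g_c; case: ne_gc; apply: val_inj.
change (\sum_(f : (nleaves t1 + nleaves t2).-tuple 'I_r)
          rlik (RBin p1 t1 p2 t2) c f = 1).
rewrite sum_tuple_cat.
under eq_bigr do under eq_bigr do rewrite rlik_RBin_cat ?size_tuple //.
by rewrite -big_distrlr /= !sum_rlik_RStem ?mulr1.
Qed.

Lemma accuracy_RBin_split (p1 p2 : R) (t1 t2 : tree R) (a : 'I_r) :
  \sum_(f : (rnleaves (RBin p1 t1 p2 t2)).-tuple 'I_r)
      rlik (RBin p1 t1 p2 t2) a f * rct (RBin p1 t1 p2 t2) f a =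
  2^-1 * (\sum_(g : (rnleaves (RStem p1 t1)).-tuple 'I_r)
              rlik (RStem p1 t1) a g * rct (RStem p1 t1) g a +
          \sum_(h : (rnleaves (RStem p2 t2)).-tuple 'I_r)
              rlik (RStem p2 t2) a h * rct (RStem p2 t2) h a).
Proof.
rewrite (sum_tuple_cat _ _ _ _
  (fun f => rlik (RBin p1 t1 p2 t2) a f * rct (RBin p1 t1 p2 t2) f a)).
transitivity (2^-1 * \sum_(g : (nleaves t1).-tuple 'I_r)
    \sum_(h : (nleaves t2).-tuple 'I_r)
      (rlik (RStem p1 t1) a g * ct t1 g a * rlik (RStem p2 t2) a h +
       rlik (RStem p1 t1) a g * (rlik (RStem p2 t2) a h * ct t2 h a))).
  rewrite mulr_sumr; apply: eq_bigr => g _; rewrite mulr_sumr; apply: eq_bigr => h _.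
  by rewrite rlik_RBin_cat ?rct_RBin_cat ?size_tuple //; ring.
have mass1 p t := sum_rlik_RStem p t a (sum_lik t).
congr (_ * _); under eq_bigr do rewrite big_split /=.
by rewrite big_split /= -!big_distrlr /= !mass1 mulr1 mul1r.
Qed.

End Likelihood.

Theorem theorem3 (R : realFieldType) (r : nat) (hr : (2 <= r)%N)
  (pi : 'I_r -> R) (hpi0 : forall a, 0 <= pi a) (hpi1 : \sum_(a : 'I_r) pi a = 1)
  (p1 p2 : R) (T1 T2 : tree R)
  (hvalid : valid_rtree r (RBin p1 T1 p2 T2)) :
  RA pi (RBin p1 T1 p2 T2) =
    2^-1 * (RA pi (RStem p1 T1) + RA pi (RStem p2 T2)).
Proof.
rewrite /RA -big_split mulr_sumr; apply: eq_bigr => a _.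
by rewrite accuracy_RBin_split // mulrCA mulrDr.
Qed.
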